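(* Let $G$ be a finite group. Then $G$ has at least $d(|G|)$ cyclic subgroups, and $G$ has exactly $d(|G|)$ cyclic subgroups if and only if $G$ is cyclic.
   Context: For a positive integer $n$, $d(n)$ denotes the number of positive divisors of $n$. *)

From mathcomp Require Import all_boot all_fingroup all_solvable.
Set Implicit Arguments. Unset Strict Implicit. Unset Printing Implicit Defensive.

Definition ndivisors (n : nat) : nat := size (divisors n).

Definition ncyclic_subgroups (gT : finGroupType) (G : {group gT}) : nat :=
  #|[set H : {group gT} | (H \subset G) && cyclic H]|.

From mathcomp Require Import all_boot all_fingroup all_solvable.
From mathcomp Require Import all_order all_algebra.
Set Implicit Arguments. Unset Strict Implicit. Unset Printing Implicit Defensive.
Import Order.TTheory GRing.Theory Num.Theory.

(* Let n = #|G| and L_e = 'Ldiv_e(G).  Counting each element by the cyclic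
   subgroup it generates, the number of cyclic subgroups is the sum over x in G
   of 1 / totient #[x].  Choose weights h on the divisors of n with
   sum_(d | e | n) h e = 1 / totient d: they are multiplicative, on a prime power
   p ^ k they are 1/phi(p^i) - 1/phi(p^(i+1)) for i < k and 1/phi(p^k) for i = k,
   so they are nonnegative, and h e = 0 only if n is even and e is odd.  As
   sum_(d | e) totient d = e, this gives
     #cyclic subgroups - d(n) = sum_(e | n) h e * (|L_e| - e),
   where every term is nonnegative by Frobenius' theorem (e divides |L_e|), and
   every term vanishes when G is cyclic.  If G is not cyclic, two elements of equal
   order generate different cyclic subgroups, which yields an e with h e > 0 and
   |L_e| > e. *)

Lemma prime_coprime_gt0 p d : prime p -> coprime p d -> 0 < d.
Proof. by case: d => // pp; rewrite prime_coprime ?dvdn0. Qed.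

Lemma logn_pfactorM p j d : prime p -> coprime p d -> logn p (p ^ j * d) = j.
Proof.
move=> pp cpd; have d_gt0 := prime_coprime_gt0 pp cpd.
by rewrite lognM ?expn_gt0 ?(prime_gt0 pp) // pfactorK // logn_coprime ?addn0.
Qed.

Lemma dvdn_pfactorM p i j d e : prime p -> coprime p d -> coprime p e ->
  (p ^ i * d %| p ^ j * e) = (i <= j) && (d %| e).
Proof.
move=> pp cpd cpe.
rewrite Gauss_dvd ?coprimeXl // Gauss_dvdl ?coprimeXl //.
rewrite Gauss_dvdr 1?coprime_sym ?coprimeXl //.
by rewrite dvdn_Pexp2l ?prime_gt1.
Qed.

Lemma divisors_pfactorM p k m : prime p -> coprime p m ->
  perm_eq (divisors (p ^ k * m)) [seq p ^ j * d | j <- iota 0 k.+1, d <- divisors m].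
Proof.
move=> pp cpm; have m_gt0 := prime_coprime_gt0 pp cpm.
have cp_div d : d \in divisors m -> coprime p d.
  by rewrite -dvdn_divisors // => /coprime_dvdr; apply.
apply: uniq_perm; first exact: divisors_uniq.
  apply: allpairs_uniq; [exact: iota_uniq | exact: divisors_uniq|].
  move=> x y /allpairsP[[i d] [_ dm ->]] /allpairsP[[j e] [_ em ->]] /= Eij.
  have Eij' := congr1 (logn p) Eij.
  rewrite !logn_pfactorM ?cp_div // in Eij'; rewrite -Eij' in Eij *.
  by move/eqP: Eij; rewrite eqn_mul2l expn_eq0 eqn0Ngt prime_gt0 // => /eqP->.
move=> e; rewrite -dvdn_divisors ?muln_gt0 ?expn_gt0 ?(prime_gt0 pp) //.
apply/idP/allpairsP => [dv | [[j d] [jk dm ->]]]; last first.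
  move: jk dm; rewrite mem_iota -dvdn_divisors //= => jk dm.
  by rewrite dvdn_mul // dvdn_Pexp2l ?prime_gt1.
have e_gt0 : 0 < e by apply: dvdn_gt0 dv; rewrite muln_gt0 expn_gt0 prime_gt0.
have [d cpd Ee] := pfactor_coprime pp e_gt0.
move: dv; rewrite {1}Ee mulnC dvdn_pfactorM // => /andP[le_k dvd_m].
by exists (logn p e, d); split; rewrite ?mem_iota /= -?dvdn_divisors // mulnC.
Qed.

Lemma big_divisors_pfactorM (R : Type) (idx : R) (op : Monoid.com_law idx)
    (F : nat -> R) p k m : prime p -> coprime p m ->
  \big[op/idx]_(d <- divisors (p ^ k * m)) F d =
  \big[op/idx]_(j < k.+1) \big[op/idx]_(d <- divisors m) F (p ^ j * d).
Proof.
move=> pp cpm; rewrite (perm_big _ (divisors_pfactorM k pp cpm)).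
by rewrite big_allpairs_dep -[iota 0 _]/(index_iota 0 k.+1) big_mkord.
Qed.

Lemma totient_pfactorS p j : prime p -> 0 < j -> totient (p ^ j.+1) = p * totient (p ^ j).
Proof.
by move=> pp j_gt0; rewrite !totient_pfactor //= -[in LHS](prednK j_gt0) expnS mulnCA.
Qed.

Lemma leq_totient_pfactorS p j : prime p -> totient (p ^ j) <= totient (p ^ j.+1).
Proof.
move=> pp; case: j => [|j]; last by rewrite (@totient_pfactorS p j.+1) // leq_pmull ?prime_gt0.
by rewrite expn1 totient_gt0 prime_gt0.
Qed.

Lemma ltn_totient_pfactorS p j : prime p -> (0 < j) || (2 < p) ->
  totient (p ^ j) < totient (p ^ j.+1).
Proof.
move=> pp; case: j => [|j] /= => [p_gt2|_].
  by rewrite expn1 totient_gt1.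
by rewrite (@totient_pfactorS p j.+1) // ltn_Pmull ?prime_gt1 // totient_gt0 expn_gt0 prime_gt0.
Qed.

Lemma sum_totient_divisors n : 0 < n -> \sum_(d <- divisors n) totient d = n.
Proof.
move=> n_gt0; rewrite -[RHS]sum_totient_dvd -(big_mkord (dvdn^~ n)) -[RHS]big_filter.
apply: perm_big; apply: uniq_perm; rewrite ?filter_uniq ?iota_uniq ?divisors_uniq // => d.
rewrite mem_filter mem_index_iota -dvdn_divisors //.
by case dv: (d %| n); rewrite //= ltnS dvdn_leq.
Qed.

Lemma divisors_filter_dvdn n e : 0 < n -> e %| n ->
  perm_eq [seq d <- divisors n | d %| e] (divisors e).
Proof.
move=> n_gt0 dv_en; have e_gt0 := dvdn_gt0 n_gt0 dv_en.
apply: uniq_perm; rewrite ?filter_uniq ?divisors_uniq // => d.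
rewrite mem_filter -(dvdn_divisors _ n_gt0) -(dvdn_divisors _ e_gt0).
by apply/andP/idP => [[] // | dv_de]; rewrite dv_de (dvdn_trans dv_de dv_en).
Qed.

Section InverseTotientWeights.
Local Open Scope ring_scope.
Variable R : numFieldType.

Definition inv_totient_weights n (h : nat -> R) :=
  forall d, (d %| n)%N -> \sum_(e <- divisors n | (d %| e)%N) h e = (totient d)%:R^-1.

Section PrimePowerWeights.
Variables (p k : nat).
Hypothesis p_pr : prime p.

Definition pweight j : R :=
  (totient (p ^ j))%:R^-1 - (if (j < k)%N then (totient (p ^ j.+1))%:R^-1 else 0).

Let totient_pfactor_gtr0 j : 0 < (totient (p ^ j))%:R :> R.
Proof. by rewrite ltr0n totient_gt0 expn_gt0 prime_gt0. Qed.

Lemma pweight_ge0 j : 0 <= pweight j.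
Proof.
rewrite /pweight; case: ifP => _; last by rewrite subr0 invr_ge0 ltW.
by rewrite subr_ge0 lef_pV2 ?posrE // ler_nat leq_totient_pfactorS.
Qed.

Lemma pweight_gt0 j : [|| k <= j, 0 < j | 2 < p]%N -> 0 < pweight j.
Proof.
rewrite /pweight; case: (ltnP j k) => [_ | _ _] /=; last by rewrite subr0 invr_gt0.
by move=> cond; rewrite subr_gt0 ltf_pV2 ?posrE // ltr_nat ltn_totient_pfactorS.
Qed.

Lemma sum_pweight i : (i <= k)%N ->
  \sum_(i <= j < k.+1) pweight j = (totient (p ^ i))%:R^-1.
Proof.
pose f j : R := - (if (j <= k)%N then (totient (p ^ j))%:R^-1 else 0).
move=> le_ik; rewrite (telescope_sumr_eq f) 1?ltnW //; last first.
  by move=> j /andP[_]; rewrite ltnS => le_jk; rewrite /f /pweight le_jk opprK addrC.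
by rewrite /f ltnn le_ik oppr0 sub0r opprK.
Qed.

End PrimePowerWeights.

Definition weightM p k (h : nat -> R) e : R :=
  pweight p k (logn p e) * h (e %/ p ^ logn p e)%N.

Lemma inv_totient_weightsM p k m h : prime p -> coprime p m ->
  inv_totient_weights m h -> inv_totient_weights (p ^ k * m) (weightM p k h).
Proof.
move=> pp cpm hm_sum d dv.
have d_gt0 : (0 < d)%N.
  by apply: dvdn_gt0 dv; rewrite muln_gt0 expn_gt0 prime_gt0 ?(prime_coprime_gt0 pp cpm).
have [d' cpd' Ed] := pfactor_coprime pp d_gt0.
move: dv; rewrite {}Ed; move: (logn p d) => i.
rewrite mulnC dvdn_pfactorM // => /andP[le_ik dvd'm].
rewrite big_mkcond big_divisors_pfactorM //.
rewrite (eq_bigr (fun j : 'I_k.+1 =>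
    (if (i <= j)%N then pweight p k j else 0) * (totient d')%:R^-1)); last first.
  move=> j _; rewrite -hm_sum // mulr_sumr [RHS]big_mkcond; apply: eq_big_seq => e.
  rewrite -dvdn_divisors ?(prime_coprime_gt0 pp cpm) // => /coprime_dvdr/(_ cpm) cpe.
  rewrite dvdn_pfactorM // /weightM logn_pfactorM // mulKn ?expn_gt0 ?(prime_gt0 pp) //.
  by case: (i <= j)%N; case: (d' %| e)%N; rewrite /= ?mul0r ?mulr0.
have phi_neq0 x : (0 < x)%N -> (totient x)%:R != 0 :> R.
  by move=> x_gt0; rewrite pnatr_eq0 -lt0n totient_gt0.
rewrite totient_coprime ?coprimeXl // natrM invrM ?unitfE ?phi_neq0 ?expn_gt0
  ?(prime_gt0 pp) ?(prime_coprime_gt0 pp cpd') // mulrC -mulr_suml.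
by rewrite -(sum_pweight p le_ik) big_geq_mkord -big_mkcond.
Qed.

Lemma exists_inv_totient_weights n : (0 < n)%N -> exists h : nat -> R,
  [/\ inv_totient_weights n h, forall e, 0 <= h e &
      forall e, (e %| n)%N -> odd n || ~~ odd e -> 0 < h e].
Proof.
elim/ltn_ind: n => n IH n_gt0.
have [n_le1 | n_gt1] := leqP n 1.
  have -> : n = 1%N by apply/eqP; rewrite eqn_leq n_le1.
  exists (fun _ => 1); split=> // d; rewrite dvdn1 => /eqP ->.
  by rewrite big_mkcond big_seq1 /= invr1.
set p := pdiv n; have pp : prime p := pdiv_prime n_gt1.
have [m cpm En] := pfactor_coprime pp n_gt0; set k := logn p n in En.
have m_gt0 := prime_coprime_gt0 pp cpm.
have k_gt0 : (0 < k)%N by rewrite logn_gt0 mem_primes pp n_gt0 pdiv_dvd.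
have m_lt_n : (m < n)%N by rewrite En ltn_Pmulr // -(expn0 p) ltn_exp2l ?prime_gt1.
have m_odd : odd m.
  apply: contraLR cpm; rewrite -dvdn2 => m2.
  have p2 : p = 2%N.
    by apply/eqP; rewrite eqn_leq prime_gt1 // andbT pdiv_min_dvd // En dvdn_mulr.
  by rewrite p2 prime_coprime ?m2.
have [hm [hm_sum hm_ge0 hm_gt0]] := IH m m_lt_n m_gt0.
exists (weightM p k hm); rewrite En mulnC; split.
- exact: inv_totient_weightsM.
- by move=> e; rewrite mulr_ge0 ?pweight_ge0.
move=> e dv adm.
have e_gt0 : (0 < e)%N by apply: dvdn_gt0 dv; rewrite muln_gt0 expn_gt0 prime_gt0.
have [e' cpe' Ee] := pfactor_coprime pp e_gt0.
move: dv adm; rewrite {}Ee; move: (logn p e) => i.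
rewrite mulnC dvdn_pfactorM // => /andP[_ dvd_e'm] adm.
rewrite /weightM logn_pfactorM // mulKn ?expn_gt0 ?(prime_gt0 pp) //.
rewrite mulr_gt0 ?hm_gt0 ?m_odd // pweight_gt0 //.
have [p_gt2 | p_lt2 | p2] := ltngtP 2 p; rewrite ?p_gt2 ?orbT //.
  by have := prime_gt1 pp; rewrite ltnNge -ltnS p_lt2.
case: i adm => [|i]; rewrite ?orbT // expn0 mul1n oddM oddX -p2 /=.
by rewrite eqn0Ngt k_gt0 (dvdn_odd dvd_e'm m_odd).
Qed.

Lemma sum_inv_totient_weights_mul n h : (0 < n)%N -> inv_totient_weights n h ->
  \sum_(e <- divisors n) h e * e%:R = (size (divisors n))%:R.
Proof.
move=> n_gt0 h_sum.
have sum_phi e : e \in divisors n ->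
    e%:R = \sum_(d <- divisors n | (d %| e)%N) (totient d)%:R :> R.
  rewrite -dvdn_divisors // => dv_en.
  by rewrite -natr_sum -big_filter (perm_big _ (divisors_filter_dvdn n_gt0 dv_en))
             sum_totient_divisors ?(dvdn_gt0 n_gt0).
rewrite (eq_big_seq _ (fun e en => congr1 _ (sum_phi e en))) /=.
under eq_bigr do rewrite mulr_sumr.
rewrite (exchange_big_dep predT) //= -sum1_size natr_sum big_seq [RHS]big_seq.
apply: eq_bigr => d; rewrite -dvdn_divisors // => dv_dn.
by rewrite -mulr_suml h_sum // mulVf // pnatr_eq0 -lt0n totient_gt0 (dvdn_gt0 n_gt0).
Qed.

End InverseTotientWeights.

Section CyclicSubgroups.
Variables (gT : finGroupType) (G : {group gT}).
Local Open Scope group_scope.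

Lemma card_Ldiv_ge e : e %| #|G| -> e <= #|'Ldiv_e(G)|.
Proof.
move=> dv_eG; apply: dvdn_leq (Frobenius_Ldiv dv_eG).
by apply/card_gt0P; exists 1%g; rewrite !inE group1 /= expg1n eqxx.
Qed.

Lemma card_Ldiv_cyclic e : cyclic G -> e %| #|G| -> #|'Ldiv_e(G)| = e.
Proof.
move=> cycG dv_eG; pose L := Group (group_Ldiv e (cyclic_abelian cycG)).
have sLG : L \subset G by rewrite subsetIl.
have cycL := cyclicS sLG cycG.
apply/eqP; rewrite eqn_dvd Frobenius_Ldiv // andbT.
rewrite -[#|_|]/#|L| -exponent_cyclic //.
by apply/exponentP => x /setIP[_]; rewrite inE => /eqP.
Qed.

Local Open Scope ring_scope.
Variable R : numFieldType.

Lemma ncyclic_subgroups_sum_inv_totient :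
  (ncyclic_subgroups G)%:R = \sum_(x in G) (totient #[x])%:R^-1 :> R.
Proof.
pose CS := [set H : {group gT} | (H \subset G) && cyclic H].
rewrite (partition_big (fun x => <[x]>%G) (mem CS)) /=; last first.
  by move=> x Gx; rewrite inE cycle_subG Gx cycle_cyclic.
rewrite /ncyclic_subgroups -sum1_card natr_sum.
apply: eq_bigr => H; rewrite inE => /andP[sHG /cyclicP[a defH]].
rewrite (eq_bigl (generator H)) => [|x]; last first.
  rewrite /generator -val_eqE /= eq_sym andb_idl // => /eqP defx.
  by apply: (subsetP sHG); rewrite defx cycle_id.
rewrite (eq_bigr (fun _ => (totient #|H|)%:R^-1)) => [|x /eqP ->]; last by [].
have card_gen : #|generator H| = totient #|H|.
  by rewrite defH -[#|<[a]>|]/#[a] totient_gen cardsE.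
rewrite sumr_const card_gen -(mulr_natr ((totient _)%:R^-1)) mulVf //.
by rewrite pnatr_eq0 -lt0n totient_gt0.
Qed.

Lemma sum_inv_totient_order_Ldiv (h : nat -> R) : inv_totient_weights #|G| h ->
  \sum_(x in G) (totient #[x])%:R^-1 = \sum_(e <- divisors #|G|) h e * #|'Ldiv_e(G)|%:R.
Proof.
move=> h_sum; under eq_bigr => x Gx do rewrite -(h_sum _ (order_dvdG Gx)).
rewrite (exchange_big_dep predT) //=; apply: eq_bigr => e _.
rewrite (eq_bigl [in 'Ldiv_e(G)]) ?sumr_const ?mulr_natr // => x.
by rewrite !inE order_dvdn.
Qed.

End CyclicSubgroups.

Section NonCyclic.
Variables (gT : finGroupType) (G : {group gT}).
Local Open Scope group_scope.

Lemma cycle_sub_Ldiv x : x \in G -> <[x]> \subset 'Ldiv_#[x](G).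
Proof.
move=> Gx; apply/subsetP => y xy; rewrite !inE -order_dvdn.
by rewrite (subsetP _ _ xy) ?cycle_subG // order_dvdG // (subsetP _ _ xy) ?cycle_subG.
Qed.

Lemma order_lt_card_Ldiv x y : x \in G -> y \in G -> #[x] = #[y] -> <[x]> != <[y]> ->
  #[x] < #|'Ldiv_#[x](G)|.
Proof.
move=> Gx Gy oxy neq_xy.
have /subsetPn[z yz xNz] : ~~ (<[y]> \subset <[x]>).
  by apply: contra neq_xy => sub; rewrite eq_sym eqEcard sub /= -/#[y] -/#[x] oxy.
have sub : z |: <[x]> \subset 'Ldiv_#[x](G).
  by rewrite subUset cycle_sub_Ldiv // andbT sub1set oxy (subsetP (cycle_sub_Ldiv Gy)).
by apply: leq_trans (subset_leq_card sub); rewrite cardsU1 xNz.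
Qed.

Lemma unique_involution_central t : t \in G -> #[t] = 2 -> #|'Ldiv_2(G)| <= 2 ->
  {in G, forall g, commute t g}.
Proof.
move=> Gt ot le2 g Gg.
have t1 : t != 1 by apply/eqP => t_eq1; move: ot; rewrite t_eq1 order1.
have L2 : 'Ldiv_2(G) = [set 1; t].
  apply/eqP; rewrite eq_sym eqEcard cards2 eq_sym t1 le2 andbT subUset !sub1set.
  by rewrite !inE group1 Gt expg1n -order_dvdn ot eqxx.
apply/commgP/conjg_fixP.
have : t ^ g \in 'Ldiv_2(G) by rewrite !inE groupJ //= -conjXg conjg_eq1 -order_dvdn ot.
by rewrite L2 !inE conjg_eq1 (negbTE t1) => /eqP.
Qed.

Lemma Ldiv_gt_witness x y : x \in G -> y \in G -> #[x] = #[y] -> <[x]> != <[y]> ->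
  exists2 e, e %| #|G| & (odd #|G| || ~~ odd e) && (e < #|'Ldiv_e(G)|).
Proof.
move=> Gx Gy oxy neq_xy.
have [adm | ] := boolP (odd #|G| || ~~ odd #[x]).
  by exists #[x]; rewrite ?order_dvdG ?adm ?(order_lt_card_Ldiv Gx Gy).
rewrite negb_or negbK => /andP[even_G odd_x].
have [lt2 | le2] := ltnP 2 #|'Ldiv_2(G)|; first by exists 2; rewrite ?dvdn2 ?orbT.
(* Otherwise the involution [t] is unique, hence central, and multiplying by
   it makes the orders of [x] and [y] even while keeping their cycles apart. *)
have [t Gt ot] : {t | t \in G & #[t] = 2} by apply: Cauchy; rewrite ?dvdn2.
have ct := unique_involution_central Gt ot le2.
have cop_x : coprime #[x] #[t] by rewrite ot coprimen2.
have cop_y : coprime #[y] #[t] by rewrite ot coprimen2 -oxy.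
have oxt : #[x * t] = (#[x] * 2)%N by rewrite (orderM (esym (ct x Gx)) cop_x) ot.
have oyt : #[y * t] = (#[y] * 2)%N by rewrite (orderM (esym (ct y Gy)) cop_y) ot.
exists #[x * t]; first by rewrite order_dvdG ?groupM.
rewrite oxt oddM andbF orbT -oxt /= (order_lt_card_Ldiv _ (groupM Gy Gt)) ?groupM //.
  by rewrite oxt oyt oxy.
apply: contra neq_xy => /eqP Ext.
have sx : <[x]>%G \subset <[y * t]>%G by rewrite /= -Ext (cycleM (esym (ct x Gx))) // mulG_subl.
have sy : <[y]>%G \subset <[y * t]>%G by rewrite /= (cycleM (esym (ct y Gy))) // mulG_subl.
by rewrite (eq_subG_cyclic (cycle_cyclic _) sx sy) -/#[x] -/#[y] oxy.
Qed.

End NonCyclic.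

Section Counting.
Variables (gT : finGroupType) (G : {group gT}).

Lemma ncyclic_subgroups_excess : exists h : nat -> rat,
  [/\ forall e, (0 <= h e)%R,
      forall e, e %| #|G| -> odd #|G| || ~~ odd e -> (0 < h e)%R &
      ((ncyclic_subgroups G)%:R - (ndivisors #|G|)%:R =
         \sum_(e <- divisors #|G|) h e * (#|('Ldiv_e(G))%g|%:R - e%:R))%R].
Proof.
have [h [h_sum h_ge0 h_gt0]] := exists_inv_totient_weights rat (cardG_gt0 G).
exists h; split=> //.
rewrite ncyclic_subgroups_sum_inv_totient (sum_inv_totient_order_Ldiv h_sum).
rewrite -(sum_inv_totient_weights_mul (cardG_gt0 G) h_sum) -sumrB.
by apply: eq_bigr => e _; rewrite mulrBr.
Qed.

Lemma ndivisors_le_ncyclic_subgroups : ndivisors #|G| <= ncyclic_subgroups G.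
Proof.
have [h [h_ge0 _ excess]] := ncyclic_subgroups_excess.
rewrite -(ler_nat rat) -subr_ge0 excess big_seq sumr_ge0 // => e.
by rewrite -dvdn_divisors // => dv_eG; rewrite mulr_ge0 // subr_ge0 ler_nat card_Ldiv_ge.
Qed.

Lemma ndivisors_lt_ncyclic_subgroups e : e %| #|G| -> odd #|G| || ~~ odd e ->
  e < #|('Ldiv_e(G))%g| -> ndivisors #|G| < ncyclic_subgroups G.
Proof.
move=> dv_eG adm lt_e.
have [h [h_ge0 h_gt0 excess]] := ncyclic_subgroups_excess.
rewrite -(ltr_nat rat) -subr_gt0 excess (bigD1_seq e) -?dvdn_divisors ?divisors_uniq //=.
rewrite ltr_pwDl ?mulr_gt0 ?h_gt0 ?subr_gt0 ?ltr_nat // big_seq_cond sumr_ge0 // => d.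
case/andP; rewrite -dvdn_divisors // => dv_dG _.
by rewrite mulr_ge0 // subr_ge0 ler_nat card_Ldiv_ge.
Qed.

Lemma ncyclic_subgroups_cyclic : cyclic G -> ncyclic_subgroups G = ndivisors #|G|.
Proof.
move=> cycG; have [h [_ _ excess]] := ncyclic_subgroups_excess.
apply/eqP; rewrite -(eqr_nat rat) -subr_eq0 excess big_seq big1 // => e.
by rewrite -dvdn_divisors // => dv_eG; rewrite card_Ldiv_cyclic // subrr mulr0.
Qed.

End Counting.

Theorem theorem1p2 (gT : finGroupType) (G : {group gT}) :
  ndivisors #|G| <= ncyclic_subgroups G /\
  (ncyclic_subgroups G = ndivisors #|G| <-> cyclic G).
Proof.
split; first exact: ndivisors_le_ncyclic_subgroups.
split; last exact: ncyclic_subgroups_cyclic.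
move=> eq_count; apply: order_inj_cyclic => x y Gx Gy oxy.
apply/eqP/contraT => neq_xy.
have [e dv_eG /andP[adm lt_e]] := Ldiv_gt_witness Gx Gy oxy neq_xy.
by have := ndivisors_lt_ncyclic_subgroups dv_eG adm lt_e; rewrite eq_count ltnn.
Qed.
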